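(* Let $d\ge 1$ and let $P\subset\mathbb{R}^d$ be a finite set of $n\ge 1$ points. Then there exists $p\in P$ such that $p\in K$ for every skyline $K$ with $|K\cap P|>(1-\frac{1}{2d-1})n$.
   Context: A skyline in $\mathbb{R}^d$ is a set of the form $\{x\in\mathbb{R}^d: a_j\le x_j\le b_j \text{ for } 1\le j\le d-1,\ x_d\le b_d\}$ with real numbers $a_j\le b_j$ ($1\le j\le d-1$) and $b_d$; i.e., an axis-parallel box that is unbounded in the direction of the negative $x_d$-axis. *)

(* Points of R^d are row vectors 'rV[R]_d over an arbitrary
   real field R (the statement is purely order-theoretic/linear). *)
From HB Require Import structures.
From mathcomp Require Import all_boot all_order all_algebra.
Set Implicit Arguments. Unset Strict Implicit. Unset Printing Implicit Defensive.
Import Order.TTheory GRing.Theory Num.Theory.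
Local Open Scope ring_scope.

(* The skyline with parameters a, b : 'rV_d (a_j <= b_j for j < d-1, a_{d-1}
   irrelevant): { x | a_j <= x_j <= b_j for j <> d-1 (0-based), x_{d-1} <= b_{d-1} }. *)
Definition skyline (R : realFieldType) (d : nat) (a b : 'rV[R]_d) : pred 'rV[R]_d :=
  fun x => [forall j : 'I_d,
     if (val j == d.-1)%N then x 0 j <= b 0 j
     else (a 0 j <= x 0 j) && (x 0 j <= b 0 j)].

Definition skyline_params (R : realFieldType) (d : nat) (a b : 'rV[R]_d) : Prop :=
  forall j : 'I_d, (val j != d.-1)%N -> a 0 j <= b 0 j.

From HB Require Import structures.
From mathcomp Require Import all_boot all_order all_algebra.
From mathcomp Require Import zify ring lra.
Set Implicit Arguments. Unset Strict Implicit. Unset Printing Implicit Defensive.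
Import Order.TTheory GRing.Theory Num.Theory.
Local Open Scope ring_scope.

(* For a real function f on the
   points and m > 0, call p "deep in direction f" when at least n/m points q
   of P satisfy f q <= f p.  Fewer than n/m points of P are shallow in a given
   direction: the shallow point maximizing f already dominates all of them.
   Hence, for a finite family of m directions, a union bound leaves a point p
   of P that is deep in every direction.  If p is deep in direction f and a
   set K contains no point q with f q <= f p, then K misses at least n/m
   points, i.e. |K /\ P| <= (1 - 1/m) n.
   A skyline in R^d is cut out by the 2d-1 half-spaces x_j <= b_j (all j) and
   a_j <= x_j (j < d-1); a point outside it violates one of them, which gives
   such a direction f among the 2d-1 coordinate directions -x_j and x_j.
   Applying the previous facts with these m = 2d-1 directions proves the
   theorem. *)

Lemma argmax_seq {disp : Order.disp_t} {R : orderType disp} {T : eqType}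
    (s : seq T) (f : T -> R) :
  s != [::] -> exists2 x, x \in s & forall y, y \in s -> (f y <= f x)%O.
Proof.
elim: s => [//|x s IH] _.
have [-> | /IH [z zs zmax]] := eqVneq s [::].
  by exists x => [|y]; rewrite mem_seq1 // => /eqP ->.
have [fxz | fzx] := leP (f x) (f z).
- exists z; first by rewrite in_cons zs orbT.
  by move=> y /[!in_cons] /orP [/eqP -> // | /zmax].
- exists x; first by rewrite in_cons eqxx.
  move=> y /[!in_cons] /orP [/eqP -> // | /zmax fyz].
  exact: le_trans fyz (ltW fzx).
Qed.

Lemma count_exists_le {I : finType} {T : Type} (B : I -> pred T) (s : seq T) :
  (count (fun x => [exists i, B i x]) s <= \sum_i count (B i) s)%N.
Proof.
elim: s => [|x s IH] /=; first by rewrite big1.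
rewrite big_split leq_add //=.
case: existsP => [[i Bix] | _] //.
by rewrite (bigD1 i) //= Bix.
Qed.

Section Depth.

Variables (R : realFieldType) (T : eqType) (P : seq T).

Definition depth (f : T -> R) (p : T) : nat := count (fun q => f q <= f p) P.

Definition deep (m : nat) (f : T -> R) (p : T) : bool :=
  (size P <= depth f p * m)%N.

Lemma shallow_few (m : nat) (f : T -> R) :
  (0 < size P)%N -> (count (predC (deep m f)) P * m < size P)%N.
Proof.
move=> P_gt0; set shallow := predC _.
have [has_shallow | no_shallow] := boolP (has shallow P); last first.
  by move: no_shallow; rewrite has_count -eqn0Ngt => /eqP ->.
have : filter shallow P != [::] by rewrite -has_filter.
move=> /(@argmax_seq _ _ _ _ f) [p /[!mem_filter] /andP [p_shallow pP] pmax].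
apply: leq_ltn_trans (_ : depth f p * m < size P)%N; last by rewrite ltnNge.
rewrite leq_mul2r; apply/orP; right.
have -> : count shallow P = count (fun q => shallow q && (f q <= f p)) P.
  apply: eq_in_count => q qP; case q_shallow: (shallow q) => //=.
  by rewrite pmax // mem_filter; apply/andP.
by apply: sub_count => q /andP [].
Qed.

(* For any finite family of m = #|I| directions there is a point of P that is
   deep in all of them: by the union bound and shallow_few, fewer than |P|
   points of P are shallow in some direction. *)
Lemma exists_deep (I : finType) (f : I -> T -> R) :
  (0 < size P)%N -> exists2 p, p \in P & forall i, deep #|I| (f i) p.
Proof.
move=> P_gt0; set m := #|I|.
pose shallow i := predC (deep m (f i)).
pose bad p := [exists i, shallow i p].
suff few_bad : (count bad P < size P)%N.
  have /hasP [p pP p_good] : has (predC bad) P.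
    by rewrite has_count -(ltn_add2l (count bad P)) addn0 count_predC.
  exists p => // i; apply: contraR p_good => p_shallow /=.
  by apply/existsP; exists i.
have [m0 | m_gt0] := posnP m.
  rewrite (@eq_count _ _ pred0) ?count_pred0 // => p.
  by apply/existsP => -[i _]; have := card0_eq m0 i; rewrite !inE.
apply: leq_ltn_trans (count_exists_le shallow P) _.
rewrite -(ltn_pmul2r m_gt0) big_distrl /=.
apply: (@leq_ltn_trans (\sum_(i : I) (size P).-1)).
  by apply: leq_sum => i _; rewrite -ltnS prednK //; exact: shallow_few.
by rewrite sum_nat_const -[#|xpredT|]/m mulnC ltn_pmul2r // ltn_predL.
Qed.

Lemma deep_blocks (m : nat) (f : T -> R) (p : T) (K : pred T) :
  (0 < m)%N -> deep m f p -> (forall q, f q <= f p -> ~~ K q) ->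
  (count K P)%:R <= (1 - 1 / m%:R) * (size P)%:R :> R.
Proof.
move=> m_gt0 p_deep K_above.
have K_disjoint : (count K P + depth f p <= size P)%N.
  by rewrite -(count_predC K P) leq_add2l; apply: sub_count => q /= /K_above.
have m_pos : 0 < m%:R :> R by rewrite ltr0n.
have depth_large : (size P)%:R / m%:R <= (depth f p)%:R :> R.
  by rewrite ler_pdivrMr // -natrM ler_nat.
have K_small : (count K P)%:R + (depth f p)%:R <= (size P)%:R :> R.
  by rewrite -natrD ler_nat.
have -> : (1 - 1 / m%:R) * (size P)%:R = (size P)%:R - (size P)%:R / m%:R :> R.
  by field; rewrite pnatr_eq0 -lt0n.
lra.
Qed.

End Depth.

Section SkylineDirections.

Variables (R : realFieldType) (d : nat).

(* The 2d-1 coordinate directions of R^(d+1) attached to skylines: -x_j for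
   every coordinate j (upper bounds) and x_j for the d coordinates j other
   than the last one (lower bounds), the latter indexed through lift ord_max. *)
Definition direction (i : 'I_d.+1 + 'I_d) : 'rV[R]_d.+1 -> R :=
  match i with
  | inl j => fun x => - x 0 j
  | inr k => fun x => x 0 (lift ord_max k)
  end.

Lemma card_direction : #|{: 'I_d.+1 + 'I_d}| = (2 * d.+1 - 1)%N.
Proof. by rewrite card_sum !card_ord; lia. Qed.

Lemma lift_max_neq (k : 'I_d) : (val (lift ord_max k) == d) = false.
Proof. by rewrite /= /bump leqNgt ltn_ord add0n ltn_eqF. Qed.

Lemma skyline_upper {a b q : 'rV[R]_d.+1} (j : 'I_d.+1) :
  skyline a b q -> q 0 j <= b 0 j.
Proof. by move=> /forallP /(_ j); case: ifP => // _ /andP []. Qed.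

Lemma skyline_lower {a b q : 'rV[R]_d.+1} (k : 'I_d) :
  skyline a b q -> a 0 (lift ord_max k) <= q 0 (lift ord_max k).
Proof.
by move=> /forallP /(_ (lift ord_max k)); rewrite lift_max_neq => /andP [].
Qed.

(* A point outside a skyline violates one of its defining inequalities, so
   in the corresponding direction the whole skyline lies strictly above it. *)
Lemma skyline_escape (a b p : 'rV[R]_d.+1) : ~~ skyline a b p ->
  exists i, forall q, direction i q <= direction i p -> ~~ skyline a b q.
Proof.
have upper_escape j : b 0 j < p 0 j ->
    exists i, forall q, direction i q <= direction i p -> ~~ skyline a b q.
  move=> bp; exists (inl j) => q /=; rewrite lerN2 => pq.
  apply/negP => /(skyline_upper j) qb.
  by move: (lt_le_trans bp (le_trans pq qb)); rewrite ltxx.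
have lower_escape k : p 0 (lift ord_max k) < a 0 (lift ord_max k) ->
    exists i, forall q, direction i q <= direction i p -> ~~ skyline a b q.
  move=> pa; exists (inr k) => q /= qp.
  apply/negP => /(skyline_lower k) aq.
  by move: (lt_le_trans pa (le_trans aq qp)); rewrite ltxx.
rewrite /skyline negb_forall => /existsP [j].
have [k -> | ->] := unliftP ord_max j.
- rewrite lift_max_neq negb_and -!ltNge.
  by case/orP => [/lower_escape | /upper_escape].
- by rewrite /= eqxx -ltNge => /upper_escape.
Qed.

End SkylineDirections.

Theorem corollary2 (R : realFieldType) (d : nat) (P : seq 'rV[R]_d) :
  (1 <= d)%N -> uniq P -> (1 <= size P)%N ->
  exists2 p, p \in P &
    forall a b : 'rV[R]_d, skyline_params a b ->
      (1 - 1 / ((2 * d - 1)%N)%:R : R) * (size P)%:R < (count (skyline a b) P)%:R ->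
      skyline a b p.
Proof.
case: d P => [//|d] P _ _ P_gt0.
have [p pP p_deep] := exists_deep (@direction R d) P_gt0.
exists p => // a b _ K_large; apply/negPn/negP => p_out.
have [i K_above] := skyline_escape p_out.
have m_gt0 : (0 < #|{: 'I_d.+1 + 'I_d}|)%N by rewrite card_direction; lia.
have := deep_blocks m_gt0 (p_deep i) K_above.
by rewrite card_direction leNgt K_large.
Qed.
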